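(* Let $N \ge 1$ and let $f_N(t) = \sum_{n=1}^N c_n e^{\alpha_n t}$ with real coefficients $c_n$ and real rate constants $\alpha_n$ that are pairwise distinct and all nonzero, and assume $f_N(t) \ge 0$ for all $t \ge 0$. Let $t_1,\dots,t_{2N}$ be distinct nonnegative reals. For $k \ge 0$ let $$I_{(k)}(t) := \int_0^{t}\int_0^{t^{(1)}}\cdots\int_0^{t^{(k)}} f_N(t^{(k+1)})\, dt^{(k+1)} \cdots dt^{(1)}$$ denote the $(k+1)$-fold iterated integral of $f_N$ from $0$ (so $I_{(0)}(t)=\int_0^t f_N(s)\,ds$). Then the data $\{f_N(t_i) : i = 1,\dots,2N\}$ together with $\{I_{(k)}(t_i) : k = 0,1,\dots,N,\ i = 1,\dots,2N\}$ uniquely determine the coefficients $c_n$ and the rate constants $\alpha_n$, $n = 1,\dots,N$. *)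

From Stdlib Require Import Reals.
From Coquelicot Require Import Coquelicot.
Open Scope R_scope.

(* f_N(t) = sum_{n=0}^{N-1} c n * exp (a n * t)  (0-based indexing of the N terms) *)
Fixpoint expsum (c a : nat -> R) (N : nat) (t : R) : R :=
  match N with
  | O => 0
  | S m => expsum c a m t + c m * exp (a m * t)
  end.

Fixpoint iter_int (f : R -> R) (k : nat) (t : R) : R :=
  match k with
  | O => RInt f 0 t
  | S k' => RInt (iter_int f k') 0 t
  end.

Definition admissible (N : nat) (c a : nat -> R) : Prop :=
  (forall n m, (n < N)%nat -> (m < N)%nat -> a n = a m -> n = m) /\
  (forall n, (n < N)%nat -> a n <> 0) /\
  (forall n, (n < N)%nat -> c n <> 0) /\
  (forall t, 0 <= t -> 0 <= expsum c a N t).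

(** A real exponential sum [sum_j g_j exp (b_j t)] with [K] distinct exponents
    that vanishes at [K] distinct points is identically zero: multiplying by
    [exp (- b_0 t)] makes one term constant, and by Rolle's theorem the
    derivative, a sum with [K - 1] distinct exponents, vanishes at [K - 1]
    points.  The difference [f_N - f'_N] is an exponential sum with at most
    [2 N] distinct exponents vanishing at the [2 N] sample points, so the
    coefficient of every exponential agrees in [f_N] and [f'_N]. *)

From Stdlib Require Import Reals Lra Lia.
From Coquelicot Require Import Coquelicot.
From Stdlib Require Import List Sorted Permutation Orders ROrderedType Mergesort.
From Stdlib Require Import IndefiniteDescription.
Open Scope R_scope.

Module RLeb := OTF_to_TTLB R_as_OT.
Module RSort := Sort RLeb.

Lemma NoDup_Rlt_sort (zs : list R) :
  NoDup zs -> exists ys, Permutation zs ys /\ Sorted Rlt ys.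
Proof.
  intros Hzs; exists (RSort.sort zs); split; [apply RSort.Permuted_sort|].
  assert (Hnd := Permutation_NoDup (RSort.Permuted_sort zs) Hzs).
  induction (RSort.Sorted_sort zs) as [|y ys _ IH Hhd]; constructor.
  - apply IH; inversion Hnd; assumption.
  - destruct Hhd as [|y' ys' Hle]; constructor.
    apply RLeb.leb_le in Hle; inversion_clear Hnd as [|? ? Hnin].
    destruct Hle as [Hlt|Heq]; [exact Hlt|subst; exfalso; apply Hnin; left; reflexivity].
Qed.

Lemma Rolle_zeros (h h' : R -> R) :
  (forall t, derivable_pt_lim h t (h' t)) ->
  forall z zs, Sorted Rlt (z :: zs) -> Forall (fun x => h x = 0) (z :: zs) ->
  exists ws, Sorted Rlt ws /\ length ws = length zs /\
    Forall (fun w => h' w = 0) ws /\ HdRel Rlt z ws.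
Proof.
  intros Hd z zs; revert z; induction zs as [|z2 zs IH]; intros z Hs Hz.
  { exists nil; repeat constructor. }
  inversion_clear Hs as [|? ? Hs2 Hhd]; inversion_clear Hhd as [|? ? Hlt].
  inversion_clear Hz as [|? ? Hz1 Hz2]; inversion Hz2 as [|? ? Hz2' _]; subst.
  destruct (IH z2 Hs2 Hz2) as [ws [Hws [Hlen [Hzero Hhd]]]].
  destruct (MVT_cor2 h h' z z2 Hlt (fun x _ => Hd x)) as [w [Hmvt [Hzw Hwz2]]].
  assert (Hw : h' w = 0).
  { rewrite Hz1, Hz2' in Hmvt; apply (Rmult_eq_reg_r (z2 - z)); lra. }
  exists (w :: ws); split; [|split; [simpl; congruence|split]].
  - constructor; [exact Hws|].
    destruct Hhd as [|w' ws' Hw']; constructor; lra.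
  - constructor; assumption.
  - constructor; lra.
Qed.

Section ExpsumOn.

Variable X : Type.

Fixpoint expsum_on (l : list X) (g h : X -> R) (t : R) : R :=
  match l with
  | nil => 0
  | x :: l' => g x * exp (h x * t) + expsum_on l' g h t
  end.

Lemma expsum_on_eq0 l g h t : (forall x, In x l -> g x = 0) -> expsum_on l g h t = 0.
Proof.
  induction l as [|x l IH]; intros Hg; simpl; [reflexivity|].
  rewrite Hg, IH; [ring| |left; reflexivity].
  intros y Hy; apply Hg; right; exact Hy.
Qed.

Lemma expsum_on_add l g1 g2 h t :
  expsum_on l (fun x => g1 x + g2 x) h t = expsum_on l g1 h t + expsum_on l g2 h t.
Proof. induction l as [|x l IH]; simpl; [ring|]; rewrite IH; ring. Qed.

Lemma expsum_on_sub l g1 g2 h t :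
  expsum_on l (fun x => g1 x - g2 x) h t = expsum_on l g1 h t - expsum_on l g2 h t.
Proof. induction l as [|x l IH]; simpl; [ring|]; rewrite IH; ring. Qed.

Lemma expsum_on_mul_exp l g h d t :
  expsum_on l g h t * exp (d * t) = expsum_on l g (fun x => h x + d) t.
Proof.
  induction l as [|x l IH]; simpl; [ring|].
  rewrite <- IH, Rmult_plus_distr_r, Rmult_assoc, <- exp_plus.
  do 3 f_equal; ring.
Qed.

Lemma derivable_pt_lim_expsum_on l g h t :
  derivable_pt_lim (expsum_on l g h) t (expsum_on l (fun x => g x * h x) h t).
Proof.
  induction l as [|x l IH]; simpl; [apply derivable_pt_lim_const|].
  apply (derivable_pt_lim_plus (fun t => g x * exp (h x * t))); [|exact IH].
  apply is_derive_Reals; auto_derive; [exact I|ring].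
Qed.

Lemma expsum_on_coef_eq0 l g h zs :
  NoDup (map h l) -> Sorted Rlt zs -> (length l <= length zs)%nat ->
  Forall (fun z => expsum_on l g h z = 0) zs -> forall x, In x l -> g x = 0.
Proof.
  revert g h zs; induction l as [|x0 l IH]; intros g h zs Hh Hs Hlen Hz; [easy|].
  destruct zs as [|z zs]; simpl in Hlen; [lia|].
  inversion_clear Hh as [|? ? Hx0 Hh'].
  set (h1 x := h x + - h x0).
  set (H t := g x0 + expsum_on l g h1 t).
  assert (HH : forall t, expsum_on (x0 :: l) g h t * exp (- h x0 * t) = H t).
  { intros t; rewrite expsum_on_mul_exp; unfold H, h1; simpl.
    replace (h x0 + - h x0) with 0 by ring; rewrite Rmult_0_l, exp_0; ring. }
  assert (Hd : forall t, derivable_pt_lim H t (expsum_on l (fun x => g x * h1 x) h1 t)).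
  { intros t; rewrite <- Rplus_0_l.
    apply derivable_pt_lim_plus; [apply derivable_pt_lim_const|].
    apply derivable_pt_lim_expsum_on. }
  assert (HzH : Forall (fun t => H t = 0) (z :: zs)).
  { eapply Forall_impl; [|exact Hz]; intros t Ht; rewrite <- HH, Ht; ring. }
  destruct (Rolle_zeros _ _ Hd z zs Hs HzH) as [ws [Hws [Hlen' [Hzero _]]]].
  assert (Hh1 : NoDup (map h1 l)).
  { replace (map h1 l) with (map (fun y => y + - h x0) (map h l)) by apply map_map.
    apply NoDup_map_NoDup_ForallPairs; [intros y y' _ _ E; lra|exact Hh']. }
  assert (Hl : forall x, In x l -> g x = 0).
  { intros x Hx.
    assert (Hg1 := IH _ _ ws Hh1 Hws ltac:(lia) Hzero x Hx).
    destruct (Rmult_integral _ _ Hg1) as [|Hhx]; [assumption|].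
    exfalso; apply Hx0; unfold h1 in Hhx.
    replace (h x0) with (h x) by lra; apply in_map, Hx. }
  intros x [<-|Hx]; [|exact (Hl x Hx)].
  inversion_clear HzH as [|? ? Hz0 _]; unfold H in Hz0.
  rewrite expsum_on_eq0 in Hz0 by exact Hl; lra.
Qed.

End ExpsumOn.

Arguments expsum_on {X}.

Fixpoint expcoef (c a : nat -> R) (N : nat) (b : R) : R :=
  match N with
  | O => 0
  | S m => expcoef c a m b + (if Req_EM_T (a m) b then c m else 0)
  end.

Lemma expcoef_notin c a N b :
  (forall k, (k < N)%nat -> a k <> b) -> expcoef c a N b = 0.
Proof.
  induction N as [|N IH]; intros Ha; simpl; [reflexivity|].
  rewrite IH by (intros k Hk; apply Ha; lia).
  destruct (Req_EM_T (a N) b) as [E|_]; [|ring].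
  exfalso; apply (Ha N); [lia|exact E].
Qed.

Lemma expcoef_exists c a N b :
  expcoef c a N b <> 0 -> exists k, (k < N)%nat /\ a k = b.
Proof.
  induction N as [|N IH]; simpl; intros Hb; [lra|].
  destruct (Req_EM_T (a N) b) as [E|_]; [exists N; split; [lia|exact E]|].
  destruct IH as [k [Hk E]]; [lra|exists k; split; [lia|exact E]].
Qed.

Lemma expcoef_inj c a N k :
  (forall n m, (n < N)%nat -> (m < N)%nat -> a n = a m -> n = m) ->
  (k < N)%nat -> expcoef c a N (a k) = c k.
Proof.
  induction N as [|N IH]; intros Ha Hk; [lia|simpl].
  destruct (Req_EM_T (a N) (a k)) as [E|E].
  - assert (k = N) as -> by (symmetry; apply Ha; auto).
    rewrite expcoef_notin; [ring|].
    intros k Hk' Ek; apply Ha in Ek; lia.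
  - destruct (Nat.eq_dec k N) as [->|]; [congruence|].
    rewrite IH; [ring|intros; apply Ha; auto|lia].
Qed.

Lemma expsum_on_indicator (l : list R) b v t :
  NoDup l -> In b l ->
  expsum_on l (fun x => if Req_EM_T b x then v else 0) (fun x => x) t = v * exp (b * t).
Proof.
  induction l as [|x l IH]; intros Hl Hb; [destruct Hb|].
  inversion_clear Hl as [|? ? Hx Hl']; simpl.
  destruct (Req_EM_T b x) as [<-|Hne].
  - rewrite expsum_on_eq0; [ring|].
    intros y Hy; destruct (Req_EM_T b y) as [<-|]; [contradiction|reflexivity].
  - rewrite IH; [ring|exact Hl'|].
    destruct Hb as [<-|]; [congruence|assumption].
Qed.

Lemma expsum_grouped c a N (B : list R) t :
  NoDup B -> (forall n, (n < N)%nat -> In (a n) B) ->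
  expsum c a N t = expsum_on B (expcoef c a N) (fun b => b) t.
Proof.
  induction N as [|N IH]; intros HB Ha; simpl.
  - symmetry; apply expsum_on_eq0; reflexivity.
  - rewrite expsum_on_add, expsum_on_indicator, IH; auto.
Qed.

Lemma expcoef_eq_of_expsum_eq_on N c a c' a' (zs : list R) :
  NoDup zs -> (2 * N <= length zs)%nat ->
  Forall (fun z => expsum c a N z = expsum c' a' N z) zs ->
  forall b, expcoef c a N b = expcoef c' a' N b.
Proof.
  intros Hzs Hlen Hagree b.
  set (B := nodup Req_EM_T (map a (seq 0 N) ++ map a' (seq 0 N))).
  assert (HB : NoDup B) by apply NoDup_nodup.
  assert (HinB : forall n, (n < N)%nat -> In (a n) B /\ In (a' n) B).
  { intros n Hn; unfold B; rewrite !nodup_In, !in_app_iff.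
    split; [left|right]; apply in_map, in_seq; lia. }
  destruct (in_dec Req_EM_T b B) as [Hb|Hb].
  - destruct (NoDup_Rlt_sort zs Hzs) as [ys [Hperm Hys]].
    apply Rminus_diag_uniq.
    refine (expsum_on_coef_eq0 _ B (fun b => expcoef c a N b - expcoef c' a' N b)
              (fun b => b) ys _ Hys _ _ b Hb).
    + rewrite map_id; exact HB.
    + rewrite <- (Permutation_length Hperm).
      transitivity (length (map a (seq 0 N) ++ map a' (seq 0 N))).
      * apply NoDup_incl_length; [exact HB|intros x; apply nodup_In].
      * rewrite length_app, !length_map, length_seq; lia.
    + rewrite Forall_forall in Hagree |- *; intros z Hz.
      rewrite expsum_on_sub, <- !expsum_grouped by (auto; apply HinB).
      rewrite (Hagree z (Permutation_in _ (Permutation_sym Hperm) Hz)); ring.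
  - rewrite !expcoef_notin; [reflexivity| |];
      intros k Hk <-; apply Hb, HinB, Hk.
Qed.

Lemma expcoef_reindex N c a c' a' :
  (forall n m, (n < N)%nat -> (m < N)%nat -> a n = a m -> n = m) ->
  (forall n m, (n < N)%nat -> (m < N)%nat -> a' n = a' m -> n = m) ->
  (forall n, (n < N)%nat -> c' n <> 0) ->
  (forall b, expcoef c a N b = expcoef c' a' N b) ->
  exists sigma : nat -> nat,
    (forall n, (n < N)%nat -> (sigma n < N)%nat) /\
    (forall n m, (n < N)%nat -> (m < N)%nat -> sigma n = sigma m -> n = m) /\
    (forall n, (n < N)%nat -> c' n = c (sigma n) /\ a' n = a (sigma n)).
Proof.
  intros Ha Ha' Hc' Hcoef.
  assert (Hex : forall n, exists k, (n < N)%nat -> (k < N)%nat /\ c' n = c k /\ a' n = a k).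
  { intros n; destruct (Nat.lt_ge_cases n N) as [Hn|Hn]; [|exists 0%nat; lia].
    assert (Hb : expcoef c a N (a' n) = c' n) by (rewrite Hcoef; apply expcoef_inj; auto).
    destruct (expcoef_exists c a N (a' n)) as [k [Hk Ek]]; [rewrite Hb; auto|].
    exists k; intros _; split; [exact Hk|split; [|congruence]].
    rewrite <- Hb, <- Ek; apply expcoef_inj; auto. }
  destruct (functional_choice _ Hex) as [sigma Hsigma].
  exists sigma; split; [|split].
  - intros n Hn; apply Hsigma, Hn.
  - intros n m Hn Hm E; apply Ha'; auto.
    destruct (Hsigma n Hn) as [_ [_ ->]], (Hsigma m Hm) as [_ [_ ->]]; congruence.
  - intros n Hn; destruct (Hsigma n Hn) as [_ Hcs]; exact Hcs.
Qed.

Theorem theorem2 (N : nat) (HN : (1 <= N)%nat)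
  (c a c' a' : nat -> R) (ts : nat -> R)
  (Hadm : admissible N c a) (Hadm' : admissible N c' a')
  (Hts0 : forall i, (i < 2 * N)%nat -> 0 <= ts i)
  (Htsd : forall i j, (i < 2 * N)%nat -> (j < 2 * N)%nat -> ts i = ts j -> i = j)
  (Hf : forall i, (i < 2 * N)%nat -> expsum c a N (ts i) = expsum c' a' N (ts i))
  (HI : forall k i, (k <= N)%nat -> (i < 2 * N)%nat ->
          iter_int (expsum c a N) k (ts i) = iter_int (expsum c' a' N) k (ts i)) :
  exists sigma : nat -> nat,
    (forall n, (n < N)%nat -> (sigma n < N)%nat) /\
    (forall n m, (n < N)%nat -> (m < N)%nat -> sigma n = sigma m -> n = m) /\
    (forall n, (n < N)%nat -> c' n = c (sigma n) /\ a' n = a (sigma n)).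
Proof.
  destruct Hadm as [Ha _], Hadm' as [Ha' [_ [Hc' _]]].
  apply expcoef_reindex; [exact Ha|exact Ha'|exact Hc'|].
  apply (expcoef_eq_of_expsum_eq_on N c a c' a' (map ts (seq 0 (2 * N)))).
  - apply NoDup_map_NoDup_ForallPairs; [|apply seq_NoDup].
    intros i j Hi Hj; apply in_seq in Hi, Hj; apply Htsd; lia.
  - rewrite length_map, length_seq; lia.
  - apply Forall_forall; intros z Hz; apply in_map_iff in Hz as [i [<- Hi]].
    apply in_seq in Hi; apply Hf; lia.
Qed.
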